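(* Let $(U,R_1)$ and $(V,R_2)$ be approximation spaces with binary operations $*_1$ on $U$ and $*_2$ on $V$. Equip $U\times V$ with the equivalence relation $R$ given by $(x,y)R(x',y')$ iff $xR_1x'$ and $yR_2y'$, and with the binary operation $(x,y)*(x',y')=(x*_1x',\,y*_2y')$. If $G_1\subseteq U$ and $G_2\subseteq V$ are rough groups, then $G_1\times G_2\subseteq U\times V$ is a rough group in the approximation space $(U\times V,R)$.
   Context: An approximation space is a pair $(U,R)$ with $U$ a set and $R$ an equivalence relation on $U$; for $X\subseteq U$, the upper approximation is $\overline{X}=\bigcup\{[x]_R : [x]_R\cap X\neq\emptyset\}$ and the lower approximation is $\underline{X}=\bigcup\{[x]_R : [x]_R\subseteq X\}$. Given a binary operation (written $xy$) on $U$, a subset $G\subseteq U$ is a rough group if: (1) $xy\in\overline{G}$ for all $x,y\in G$; (2) $(xy)z=x(yz)$ for all $x,y,z\in\overline{G}$; (3) there is $e\in\overline{G}$ with $xe=ex=x$ for all $x\in G$; (4) for every $x\in G$ there is $y\in G$ with $xy=yx=e$. *)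

From Stdlib Require Import Relations.

Definition eq_class {U : Type} (R : relation U) (x : U) : U -> Prop :=
  fun y => R x y.

Definition upper_approx {U : Type} (R : relation U) (X : U -> Prop) : U -> Prop :=
  fun z => exists x, eq_class R x z /\ exists w, eq_class R x w /\ X w.

Definition lower_approx {U : Type} (R : relation U) (X : U -> Prop) : U -> Prop :=
  fun z => exists x, eq_class R x z /\ forall w, eq_class R x w -> X w.

Definition rough_group {U : Type} (R : relation U) (op : U -> U -> U)
  (G : U -> Prop) : Prop :=
  (forall x y, G x -> G y -> upper_approx R G (op x y)) /\
  (forall x y z, upper_approx R G x -> upper_approx R G y -> upper_approx R G z ->
     op (op x y) z = op x (op y z)) /\
  (exists e, upper_approx R G e /\
     (forall x, G x -> op x e = x /\ op e x = x) /\
     (forall x, G x -> exists y, G y /\ op x y = e /\ op y x = e)).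

Definition prod_rel {U V : Type} (R1 : relation U) (R2 : relation V) :
  relation (U * V) :=
  fun p q => R1 (fst p) (fst q) /\ R2 (snd p) (snd q).

Definition prod_op {U V : Type} (op1 : U -> U -> U) (op2 : V -> V -> V) :
  U * V -> U * V -> U * V :=
  fun p q => (op1 (fst p) (fst q), op2 (snd p) (snd q)).

Definition prod_set {U V : Type} (G1 : U -> Prop) (G2 : V -> Prop) :
  U * V -> Prop :=
  fun p => G1 (fst p) /\ G2 (snd p).

(* Both the upper approximation of a product set in the product space and the
   product operation are computed componentwise, so each rough-group axiom for
   [G1 * G2] splits into the same axiom for [G1] and for [G2]; the identity and
   the inverses are the pairs of the componentwise ones. *)
From Stdlib Require Import Relations.

Section ProductRoughGroup.

Context {U V : Type} {R1 : relation U} {R2 : relation V}.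
Context {op1 : U -> U -> U} {op2 : V -> V -> V} {G1 : U -> Prop} {G2 : V -> Prop}.

Notation R := (prod_rel R1 R2).
Notation op := (prod_op op1 op2).
Notation G := (prod_set G1 G2).

Lemma upper_approx_prod (z : U * V) :
  upper_approx R G z <-> upper_approx R1 G1 (fst z) /\ upper_approx R2 G2 (snd z).
Proof.
  unfold upper_approx, eq_class, prod_rel, prod_set; split.
  - intros [x [[Rx1 Rx2] [w [[Rw1 Rw2] [Gw1 Gw2]]]]].
    split; [exists (fst x) | exists (snd x)]; eauto.
  - intros [[x1 [Rx1 [w1 [Rw1 Gw1]]]] [x2 [Rx2 [w2 [Rw2 Gw2]]]]].
    exists (x1, x2); split; [now split|].
    now exists (w1, w2).
Qed.

Lemma prod_op_upper_closed :
  (forall x y, G1 x -> G1 y -> upper_approx R1 G1 (op1 x y)) ->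
  (forall x y, G2 x -> G2 y -> upper_approx R2 G2 (op2 x y)) ->
  forall p q, G p -> G q -> upper_approx R G (op p q).
Proof.
  intros closed1 closed2 p q [Gp1 Gp2] [Gq1 Gq2].
  apply upper_approx_prod; split; simpl; auto.
Qed.

Lemma prod_op_assoc_on_upper :
  (forall x y z, upper_approx R1 G1 x -> upper_approx R1 G1 y ->
     upper_approx R1 G1 z -> op1 (op1 x y) z = op1 x (op1 y z)) ->
  (forall x y z, upper_approx R2 G2 x -> upper_approx R2 G2 y ->
     upper_approx R2 G2 z -> op2 (op2 x y) z = op2 x (op2 y z)) ->
  forall p q r, upper_approx R G p -> upper_approx R G q -> upper_approx R G r ->
    op (op p q) r = op p (op q r).
Proof.
  intros assoc1 assoc2 p q r Up Uq Ur.
  apply upper_approx_prod in Up as [Up1 Up2], Uq as [Uq1 Uq2], Ur as [Ur1 Ur2].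
  unfold prod_op; simpl; f_equal; auto.
Qed.

Lemma prod_op_identity {e1 : U} {e2 : V} :
  (forall x, G1 x -> op1 x e1 = x /\ op1 e1 x = x) ->
  (forall x, G2 x -> op2 x e2 = x /\ op2 e2 x = x) ->
  forall p, G p -> op p (e1, e2) = p /\ op (e1, e2) p = p.
Proof.
  intros unit1 unit2 [x1 x2] [Gx1 Gx2].
  destruct (unit1 x1 Gx1) as [r1 l1], (unit2 x2 Gx2) as [r2 l2].
  unfold prod_op; simpl; rewrite r1, l1, r2, l2; auto.
Qed.

Lemma prod_op_inverses {e1 : U} {e2 : V} :
  (forall x, G1 x -> exists y, G1 y /\ op1 x y = e1 /\ op1 y x = e1) ->
  (forall x, G2 x -> exists y, G2 y /\ op2 x y = e2 /\ op2 y x = e2) ->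
  forall p, G p -> exists q, G q /\ op p q = (e1, e2) /\ op q p = (e1, e2).
Proof.
  intros inv1 inv2 [x1 x2] [Gx1 Gx2].
  destruct (inv1 x1 Gx1) as [y1 [Gy1 [r1 l1]]], (inv2 x2 Gx2) as [y2 [Gy2 [r2 l2]]].
  exists (y1, y2); unfold prod_set, prod_op; simpl.
  rewrite r1, l1, r2, l2; auto.
Qed.

End ProductRoughGroup.

Theorem mainTheorem4 (U V : Type) (R1 : relation U) (R2 : relation V)
  (op1 : U -> U -> U) (op2 : V -> V -> V) (G1 : U -> Prop) (G2 : V -> Prop) :
  equivalence U R1 -> equivalence V R2 ->
  rough_group R1 op1 G1 -> rough_group R2 op2 G2 ->
  rough_group (prod_rel R1 R2) (prod_op op1 op2) (prod_set G1 G2).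
Proof.
  intros _ _ [closed1 [assoc1 [e1 [Ue1 [unit1 inv1]]]]]
             [closed2 [assoc2 [e2 [Ue2 [unit2 inv2]]]]].
  split; [|split].
  - exact (prod_op_upper_closed closed1 closed2).
  - exact (prod_op_assoc_on_upper assoc1 assoc2).
  - exists (e1, e2); split; [|split].
    + now apply upper_approx_prod.
    + exact (prod_op_identity unit1 unit2).
    + exact (prod_op_inverses inv1 inv2).
Qed.
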